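(* Let $\mathcal{H}$ be the Hilbert space described in the context and $p\in[1,\infty)$. Let $\mu$ be a Borel probability measure on $\mathcal{H}$ such that for some $s>2p$, $$\widetilde{M}_s(\mu):=\int \Big(\sum_{j=1}^{\infty}\frac{1}{\lambda_j^2}\langle x, \psi_j\rangle^2_{L^2} \Big)^{\frac{s}{2}}\,\mu(dx) <\infty,$$ and assume there are constants $C>0$, $\gamma>1$ with $\lambda_j\le Cj^{-\gamma}$ for all $j\ge1$. Then $$\int_{\mathcal{H}} \|\mathrm{Proj}^d (x)-x\|^q_{\mathcal{H}}\,\mu(dx) \leq C d^{-\frac{q\gamma}{2}}$$ for all $d\geq 1$ and all $q\in [1,s]$, where the constant $C$ depends only on $q$ and $\widetilde{M}_s(\mu)$.
   Context: Let $(\Omega,m)$ be a measure space, $(\psi_j)_{j\ge1}$ an orthonormal basis of $L^2(\Omega,m)$ with inner product $\langle\cdot,\cdot\rangle_{L^2}$, and $(\lambda_j)_{j\ge1}$ a non-increasing sequence of positive numbers converging to $0$. Let $\mathcal{H}=\{f\in L^2(\Omega,m):\sum_j\langle f,\psi_j\rangle_{L^2}^2/\lambda_j<\infty\}$ with inner product $\langle f,g\rangle_{\mathcal{H}}=\sum_j\lambda_j^{-1}\langle f,\psi_j\rangle_{L^2}\langle g,\psi_j\rangle_{L^2}$ and norm $\|\cdot\|_{\mathcal{H}}$. $\mathrm{Proj}^d$ is the orthogonal projection onto $\mathrm{span}\{\sqrt{\lambda_j}\psi_j:j=1,\dots,d\}$. *)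

From HB Require Import structures.
From mathcomp Require Import all_boot all_order all_algebra.
From mathcomp Require Import all_classical all_reals all_analysis.
Set Implicit Arguments. Unset Strict Implicit. Unset Printing Implicit Defensive.
Import Order.TTheory GRing.Theory Num.Theory.
Import numFieldNormedType.Exports.
Local Open Scope classical_set_scope.
Local Open Scope ring_scope.

Section Defs.
Context {dT : measure_display} {T : measurableType dT} {R : realType}.
Variable m : {measure set T -> \bar R}.

Definition L2 (f : T -> R) : Prop :=
  measurable_fun setT f /\ m.-integrable setT (fun t => (f t ^+ 2)%:E).

Definition L2inner (f g : T -> R) : R := \int[m]_t (f t * g t).

Definition ONB (psi : nat -> T -> R) : Prop :=
  (forall j, L2 (psi j)) /\
  (forall i j, L2inner (psi i) (psi j) = (i == j)%:R) /\
  (forall f, L2 f -> (forall j, L2inner f (psi j) = 0) ->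
     m.-negligible [set t | f t != 0]).

Variables (psi : nat -> T -> R) (lam : nat -> R).

Definition coef (f : T -> R) (j : nat) : R := L2inner f (psi j).

Definition inH (f : T -> R) : Prop :=
  L2 f /\ (\sum_(j <oo) ((coef f j ^+ 2 / lam j)%:E) < +oo)%E.

Definition Hinner (f g : T -> R) : R :=
  limn (series (fun j => coef f j * coef g j / lam j)).

Definition Hnorm (f : T -> R) : R :=
  Num.sqrt (fine (\sum_(j <oo) ((coef f j ^+ 2 / lam j)%:E))%E).

(* H-orthonormal vectors sqrt(lam_j) psi_j (0-indexed) *)
Definition evec (j : nat) : T -> R := fun t => Num.sqrt (lam j) * psi j t.

(* Orthogonal projection (in H) onto span{ sqrt(lam_j) psi_j : j = 1..d },
   i.e. 0-indexed j < d; written via the orthonormal family formula. *)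
Definition Proj (d : nat) (f : T -> R) : T -> R :=
  fun t => \sum_(j < d) Hinner f (evec j) * evec j t.

(* the weighted moment  int (sum_j <x,psi_j>^2 / lam_j^2)^(s/2) mu(dx),
   for mu the law of the H-valued random element X under P *)
Definition Mtilde {dS : measure_display} {S : measurableType dS}
  (P : probability S R) (X : S -> T -> R) (s : R) : \bar R :=
  (\int[P]_w (poweR (\sum_(j <oo) ((coef (X w) j ^+ 2 / lam j ^+ 2)%:E)) (s / 2)))%E.

End Defs.

(* In the basis (psi_j), Proj^d truncates the L^2 expansion of x after d terms,
   so Proj^d x - x keeps exactly the coefficients a_j = <x, psi_j> with j >= d.
   Since lam is nonincreasing,
     ||Proj^d x - x||_H^2 = sum_(j >= d) a_j^2 / lam_j <= lam_d * sum_j a_j^2 / lam_j^2,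
   and lam_d <= C d^(-gamma).  Raising this to the power q/2, bounding
   t^(q/2) <= 1 + t^(s/2) for q <= s and integrating against the probability
   measure gives the claim with constant C^(q/2) (1 + Mtilde_s). *)

From HB Require Import structures.
From mathcomp Require Import all_boot all_order all_algebra.
From mathcomp Require Import all_classical all_reals all_analysis.
From mathcomp Require Import ring lra measurable_realfun.
Set Implicit Arguments. Unset Strict Implicit. Unset Printing Implicit Defensive.
Import Order.TTheory GRing.Theory Num.Theory.
Import numFieldNormedType.Exports.
Local Open Scope classical_set_scope.
Local Open Scope ring_scope.

Section integral_bounds.
Context {dS : measure_display} {S : measurableType dS} {R : realType}.
Local Open Scope ereal_scope.

(* The integral of a nonnegative function is a supremum over simple minorants,
   so monotonicity holds without any measurability assumption. *)
Lemma ge0_le_integralT_nonmeasurable (mu : {measure set S -> \bar R})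
    (f g : S -> \bar R) :
  (forall x, 0 <= f x) -> (forall x, f x <= g x) ->
  \int[mu]_x f x <= \int[mu]_x g x.
Proof.
move=> f_ge0 f_le_g; have g_ge0 x : 0 <= g x by exact: le_trans (f_le_g x).
rewrite !ge0_integralTE //; apply: ereal_sup_le => _ [h h_le_f <-].
by exists h => //= x; exact: le_trans (h_le_f x) (f_le_g x).
Qed.

Lemma ge0_le_integral_mul1D (P : probability S R) (f g : S -> \bar R) (c : R) :
  (0 <= c)%R -> (forall x, 0 <= f x) -> (forall x, 0 <= g x) ->
  measurable_fun setT g -> (forall x, f x <= c%:E * (1 + g x)) ->
  \int[P]_x f x <= c%:E * (1 + \int[P]_x g x).
Proof.
move=> c_ge0 f_ge0 g_ge0 g_meas f_le.
apply: le_trans (ge0_le_integralT_nonmeasurable P f_ge0 f_le) _.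
rewrite ge0_integralZl_EFin //; last 2 first.
- by move=> x _; rewrite adde_ge0.
- by apply: emeasurable_funD => //; exact: measurable_cst.
rewrite ge0_integralD // integral_cst //.
set P_T := (X in 1 * X); have -> : P_T = 1 by exact: probability_setT.
by rewrite mul1e.
Qed.

End integral_bounds.

Lemma poweR_le_1D (R : realType) (a b : R) (x : \bar R) :
  0 < a -> a <= b -> (0 <= x)%E -> (poweR x a <= 1 + poweR x b)%E.
Proof.
move=> a_gt0 a_le_b; case: x => [x| |] //= x_ge0.
  rewrite lee_fin in x_ge0; rewrite -EFinD lee_fin.
  have [x_le1|x_gt1] := leP x 1.
    apply: le_trans (ge0_ler_powR (ltW a_gt0) _ _ x_le1) _; rewrite ?nnegrE //.
    by rewrite powR1 lerDl powR_ge0.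
  by apply: le_trans (ler_powR (ltW x_gt1) a_le_b) _; rewrite lerDr.
by rewrite !gt_eqF ?(lt_le_trans a_gt0) // addey.
Qed.

Lemma powR_decay_le (R : realType) (lam : nat -> R) (C gamma r : R) (d : nat) :
  0 <= C -> 0 <= gamma -> (forall j : nat, lam j <= C * powR (j.+1)%:R (- gamma)) ->
  (1 <= d)%N -> 0 <= r -> 0 <= lam d ->
  powR (lam d) r <= powR C r * powR d%:R (- (gamma * r)).
Proof.
move=> C_ge0 gamma_ge0 lam_decay d_ge1 r_ge0 lam_d_ge0.
have lam_d_le : lam d <= C * powR d%:R (- gamma).
  apply: le_trans (lam_decay d) _; apply: ler_wpM2l => //.
  rewrite !powRN lef_pV2 ?posrE ?powR_gt0 ?ltr0n //.
  by apply: ge0_ler_powR; rewrite ?nnegrE ?ler0n ?ler_nat.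
apply: le_trans (ge0_ler_powR r_ge0 _ _ lam_d_le) _; rewrite ?nnegrE //.
  by rewrite mulr_ge0 ?powR_ge0.
by rewrite powRM ?powR_ge0 // -powRrM mulNr.
Qed.

Section L2_expansion.
Context {dT : measure_display} {T : measurableType dT} {R : realType}.
Variable m : {measure set T -> \bar R}.

Lemma L2_integrable_mul (f g : T -> R) : L2 m f -> L2 m g ->
  m.-integrable setT (EFin \o (fun t => f t * g t)).
Proof.
move=> [mf f2] [mg g2].
apply: (le_integrable measurableT (g := fun t => (f t ^+ 2 + g t ^+ 2)%:E)).
- by apply/measurable_EFinP; exact: measurable_funM.
- move=> t _ /=; rewrite lee_fin normrM [`|_ + _|]ger0_norm ?addr_ge0 ?sqr_ge0 //.
  rewrite -(real_normK (num_real (f t))) -(real_normK (num_real (g t))).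
  by have := normr_ge0 (f t); have := normr_ge0 (g t); nra.
- under eq_fun do rewrite EFinD.
  exact: integrableD.
Qed.

Variable psi : nat -> T -> R.
Hypothesis psi_onb : ONB m psi.

Lemma integrable_comb_mul_psi (k : nat -> R) n j :
  m.-integrable setT (EFin \o (fun t => (\sum_(i < n) k i * psi i t) * psi j t)).
Proof.
have [psi_L2 _] := psi_onb.
rewrite (_ : EFin \o _ = fun t => \sum_(i < n) (k i)%:E * (psi i t * psi j t)%:E)%E.
  apply: integrable_sum => // i _.
  by apply: integrableZl => //; exact: L2_integrable_mul.
apply/funext => t /=; rewrite mulr_suml sumEFin.
by congr EFin; apply: eq_bigr => i _; rewrite mulrA.
Qed.

Lemma coef_comb (k : nat -> R) n j :
  coef m psi (fun t => \sum_(i < n) k i * psi i t) j = (j < n)%:R * k j.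
Proof.
have [psi_L2 [psi_orth _]] := psi_onb.
elim: n => [|n IHn].
  rewrite /coef /L2inner mul0r (_ : (fun t => _) = cst 0).
    by rewrite Rintegral_cst // mul0r.
  by apply/funext => t; rewrite big_ord0 mul0r.
rewrite /coef /L2inner.
under eq_fun do rewrite big_ord_recr /= mulrDl -mulrA.
rewrite RintegralD //; last 2 first.
- exact: integrable_comb_mul_psi.
- rewrite (_ : EFin \o _ = fun t => (k n)%:E * (psi n t * psi j t)%:E)%E.
    by apply: integrableZl => //; exact: L2_integrable_mul.
  by apply/funext => t /=; rewrite EFinM.
rewrite RintegralZl //; last exact: L2_integrable_mul.
rewrite [X in X + _]IHn [X in _ + _ * X]psi_orth ltnS /=.
by case: ltngtP => [_|_|->]; rewrite ?eqxx ?mulr0 ?mul0r ?addr0 ?add0r ?mulr1 ?mul1r.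
Qed.

End L2_expansion.

Section truncation.
Context {dT : measure_display} {T : measurableType dT} {R : realType}.
Variables (m : {measure set T -> \bar R}) (psi : nat -> T -> R) (lam : nat -> R).
Hypothesis psi_onb : ONB m psi.
Hypothesis lam_gt0 : forall j, 0 < lam j.

Lemma coef_evec i k :
  coef m psi (evec psi lam i) k = Num.sqrt (lam i) * (k == i)%:R.
Proof.
have [psi_L2 [psi_orth _]] := psi_onb.
rewrite /coef /L2inner /evec.
under eq_fun do rewrite -mulrA.
rewrite RintegralZl //; last exact: L2_integrable_mul.
by have := psi_orth i k; rewrite /L2inner => ->; rewrite eq_sym.
Qed.

Lemma Hinner_evec f i :
  Hinner m psi lam f (evec psi lam i) = coef m psi f i / Num.sqrt (lam i).
Proof.
apply: cvg_lim; first exact: Rhausdorff.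
apply: cvg_near_cst; near=> n.
have i_lt_n : (i < n)%N by near: n; exact: nbhs_infty_gt.
rewrite /series /= big_mkord (bigD1 (Ordinal i_lt_n)) //= big1 => [|k k_neq_i].
  rewrite coef_evec eqxx mulr1 addr0 -mulrA; congr (_ * _).
  have sqrt_gt0 : 0 < Num.sqrt (lam i) by rewrite sqrtr_gt0.
  by rewrite -{2}(sqr_sqrtr (ltW (lam_gt0 i))) expr2 invfM mulrA divff ?gt_eqF ?mul1r.
have /negbTE k_neq_i' : (k : nat) != i := k_neq_i.
by rewrite coef_evec k_neq_i' !mulr0 mul0r.
Unshelve. all: by end_near.
Qed.

Lemma Proj_expansion d f :
  Proj m psi lam d f = fun t => \sum_(i < d) coef m psi f i * psi i t.
Proof.
apply/funext => t; apply: eq_bigr => i _.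
by rewrite Hinner_evec /evec mulrA divfK // gt_eqF // sqrtr_gt0.
Qed.

Lemma coef_Proj_sub f d j : L2 m f ->
  coef m psi (Proj m psi lam d f \- f) j = - ((d <= j)%:R * coef m psi f j).
Proof.
have [psi_L2 _] := psi_onb.
move=> f_L2; rewrite /coef /L2inner.
under eq_fun do rewrite /= mulrBl.
rewrite RintegralB //; last 2 first.
- by rewrite Proj_expansion; exact: integrable_comb_mul_psi.
- exact: L2_integrable_mul.
rewrite -[X in X - _]/(coef m psi (Proj m psi lam d f) j) Proj_expansion (coef_comb psi_onb).
by rewrite ltnNge; case: (d <= j)%N; rewrite /= ?mul1r ?mul0r ?subrr ?sub0r ?oppr0.
Qed.

Lemma sqr_coef_Proj_sub f d j : L2 m f ->
  coef m psi (Proj m psi lam d f \- f) j ^+ 2 = (d <= j)%:R * coef m psi f j ^+ 2.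
Proof.
move=> f_L2; rewrite coef_Proj_sub // sqrrN exprMn.
by case: (d <= j)%N; rewrite ?expr1n ?expr0n.
Qed.

Lemma Hsqnorm_Proj_sub_lt f d : inH m psi lam f ->
  (\sum_(j <oo) ((coef m psi (Proj m psi lam d f \- f) j ^+ 2 / lam j)%:E) < +oo)%E.
Proof.
move=> [f_L2 f_fin]; apply: le_lt_trans f_fin.
apply: lee_nneseries => j _; first by rewrite lee_fin divr_ge0 ?sqr_ge0 ?ltW.
rewrite lee_fin sqr_coef_Proj_sub // ler_pM2r ?invr_gt0 //.
by case: (d <= j)%N; rewrite ?mul1r ?mul0r ?sqr_ge0.
Qed.

End truncation.

Section tail_estimate.
Context {dT : measure_display} {T : measurableType dT} {R : realType}.
Variables (m : {measure set T -> \bar R}) (psi : nat -> T -> R) (lam : nat -> R).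
Hypothesis psi_onb : ONB m psi.
Hypothesis lam_gt0 : forall j, 0 < lam j.
Hypothesis lam_noninc : forall i j, (i <= j)%N -> lam j <= lam i.

Definition sqnorm_lam2 (f : T -> R) : \bar R :=
  (\sum_(j <oo) ((coef m psi f j ^+ 2 / lam j ^+ 2)%:E))%E.

Lemma measurable_sqnorm_lam2 {dS : measure_display} {S : measurableType dS}
    (X : S -> T -> R) :
  (forall j, measurable_fun setT (fun w => coef m psi (X w) j)) ->
  measurable_fun setT (fun w => sqnorm_lam2 (X w)).
Proof.
move=> coef_meas; apply: ge0_emeasurable_sum => [j w _ _|j _].
  by rewrite lee_fin divr_ge0 ?sqr_ge0.
apply/measurable_EFinP; apply: measurable_funM; last exact: measurable_cst.
exact: measurable_funX.
Qed.

Lemma sqnorm_lam2_ge0 f : (0 <= sqnorm_lam2 f)%E.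
Proof. by apply: nneseries_ge0 => j _ _; rewrite lee_fin divr_ge0 ?sqr_ge0. Qed.

Lemma Hsqnorm_Proj_sub_le f d : L2 m f ->
  (\sum_(j <oo) ((coef m psi (Proj m psi lam d f \- f) j ^+ 2 / lam j)%:E)
     <= (lam d)%:E * sqnorm_lam2 f)%E.
Proof.
move=> f_L2; rewrite /sqnorm_lam2 -nneseriesZl => [|j _]; last first.
  by rewrite lee_fin divr_ge0 ?sqr_ge0.
apply: lee_nneseries => j _; first by rewrite lee_fin divr_ge0 ?sqr_ge0 ?ltW.
rewrite -EFinM lee_fin sqr_coef_Proj_sub //.
have [d_le_j|_] := leqP d j; last first.
  by rewrite mul0r mul0r mulr_ge0 ?divr_ge0 ?sqr_ge0 ?ltW.
have lam_j0 : lam j != 0 by rewrite gt_eqF.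
rewrite mul1r (_ : _ / lam j = lam j * (coef m psi f j ^+ 2 / lam j ^+ 2)).
  by rewrite ler_wpM2r ?divr_ge0 ?sqr_ge0 ?lam_noninc.
by field.
Qed.

Lemma powR_Hnorm_Proj_sub_le f d q : inH m psi lam f -> 0 <= q ->
  ((powR (Hnorm m psi lam (Proj m psi lam d f \- f)) q)%:E
     <= poweR (lam d)%:E (q / 2) * poweR (sqnorm_lam2 f) (q / 2))%E.
Proof.
move=> f_inH q_ge0; have [f_L2 _] := f_inH.
rewrite /Hnorm; set Te := (\sum_(j <oo) _)%E.
have Te_ge0 : (0 <= Te)%E.
  by apply: nneseries_ge0 => j _ _; rewrite lee_fin divr_ge0 ?sqr_ge0 ?ltW.
have Te_fin : Te = (fine Te)%:E.
  by rewrite fineK // ge0_fin_numE // Hsqnorm_Proj_sub_lt.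
rewrite -powR12_sqrt ?fine_ge0 // -powRrM mulrC -poweR_EFin -Te_fin.
rewrite -poweRM ?sqnorm_lam2_ge0 // ?lee_fin ?(ltW (lam_gt0 d)) //.
apply: gt0_ler_poweR; first by rewrite divr_ge0.
- by rewrite in_itv /= Te_ge0 leey.
- by rewrite in_itv /= mule_ge0 ?leey ?sqnorm_lam2_ge0 // lee_fin ltW.
- exact: Hsqnorm_Proj_sub_le.
Qed.

End tail_estimate.

Theorem lemma6p6 (dT : measure_display) (T : measurableType dT) (R : realType)
  (m : {measure set T -> \bar R}) (psi : nat -> T -> R) (lam : nat -> R)
  (p s C gamma : R) :
  ONB m psi ->
  (forall j, 0 < lam j) ->
  (forall i j, (i <= j)%N -> lam j <= lam i) ->
  lam @ \oo --> 0 ->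
  1 <= p -> 2 * p < s ->
  0 < C -> 1 < gamma ->
  (forall j : nat, lam j <= C * powR (j.+1)%:R (- gamma)) ->
  exists K : R -> R -> R,
    forall (dS : measure_display) (S : measurableType dS)
           (P : probability S R) (X : S -> T -> R),
      (forall w, inH m psi lam (X w)) ->
      (forall j, measurable_fun setT (fun w => coef m psi (X w) j)) ->
      (Mtilde m psi lam P X s < +oo)%E ->
      forall (d : nat) (q : R), (1 <= d)%N -> 1 <= q <= s ->
        (\int[P]_w (powR (Hnorm m psi lam
                           (Proj m psi lam d (X w) \- X w)) q)%:E
         <= (K q (fine (Mtilde m psi lam P X s))
               * powR d%:R (- (q * gamma / 2)))%:E)%E.
Proof.
move=> psi_onb lam_gt0 lam_noninc _ _ _ C_gt0 gamma_gt1 lam_decay.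
exists (fun q M => powR C (q / 2) * (1 + M)).
move=> dS S P X X_inH coef_meas M_fin d q d_ge1 /andP[q_ge1 q_le_s].
have q_gt0 : 0 < q by exact: lt_le_trans q_ge1.
have M_ge0 : (0 <= Mtilde m psi lam P X s)%E.
  by apply: integral_ge0 => w _; exact: poweR_ge0.
set c := powR C (q / 2) * powR d%:R (- (q * gamma / 2)).
have -> : powR C (q / 2) * (1 + fine (Mtilde m psi lam P X s)) * powR d%:R (- (q * gamma / 2))
    = c * (1 + fine (Mtilde m psi lam P X s)) by rewrite /c mulrAC.
rewrite EFinM EFinD fineK ?ge0_fin_numE //.
apply: ge0_le_integral_mul1D => [|w|w||w]; rewrite ?lee_fin ?mulr_ge0 ?powR_ge0 ?poweR_ge0 //.
- apply: measurableT_comp (measurable_poweR _) _; exact: measurable_sqnorm_lam2.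
apply: le_trans (powR_Hnorm_Proj_sub_le psi_onb lam_gt0 lam_noninc d (X_inH w) (ltW q_gt0)) _.
apply: lee_pmul; rewrite ?poweR_ge0 ?poweR_le_1D ?sqnorm_lam2_ge0 ?ler_pM2r ?divr_gt0 //.
rewrite poweR_EFin lee_fin /c (mulrAC q gamma) (mulrC (q / 2)).
apply: powR_decay_le => //; rewrite ltW //.
- exact: lt_trans gamma_gt1.
- by rewrite divr_gt0.
Qed.
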